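(* Consider the following trajectory/sensing-instant optimization problem (SP2). Let $T_f>\tau_0>0$, an integer $L\ge1$, $T=LT_f$, $V_{\max}>0$. Decision variables are a trajectory $x:[0,T]\to\mathbb{R}$ with $|\dot{x}(t)|\le V_{\max}$ for all $t$, and sensing start instants $t_1,\dots,t_L$ with $[t_l,t_l+\tau_0]\subseteq[(l-1)T_f,lT_f]$ for each $l$, such that the UAV hovers during each sensing interval ($x$ is constant on $[t_l,t_l+\tau_0]$) and at each sensing location the sensing requirement is satisfiable, i.e. $\frac{MP_{\max}}{(D-x(t_l))^2+H^2}\ge\tilde{\Gamma}$. The objective is to maximize $\frac1T\int_0^T\tilde{R}(t)\,dt$, where $\tilde{R}(t)=\log_2(1+\gamma^*(x(t)))$ if $t\in\bigcup_{l}[t_l,t_l+\tau_0]$ and $\tilde{R}(t)=\log_2\!\big(1+\frac{\gamma_0 MP_{\max}}{x(t)^2+H^2}\big)$ otherwise; no initial or final location constraint is imposed. Then there always exists an optimal solution of (SP2) whose trajectory satisfies $x(t_1)=x(t_2)$ for all $t_1,t_2\in[0,T]$ with $t_1+t_2=nT_f$ for some even integer $n$.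
   Context: Setting: a UAV at horizontal position $x(t)$ and fixed altitude $H>0$ serves a single-antenna user at ground point $(0,0)$ and senses a target at ground point $(D,0)$, $D>0$, using an $M$-antenna half-wavelength uniform linear array, transmit power budget $P_{\max}$, noise power $\sigma^2$, reference channel power $\beta_0$, and $\gamma_0=\beta_0/\sigma^2$. Time $[0,T]$ is divided into $L$ ISAC frames of length $T_f$; in each frame the UAV must sense the target once for a period of length $\tau_0$. For a UAV location $x$, $\gamma^*(x)$ denotes the maximal user SNR $|\bm{h}_c^H\bm{w}|^2/\sigma^2$ over precoders $\bm{w}\in\mathbb{C}^M$ with $\|\bm{w}\|^2\le P_{\max}$ and beam pattern gain $|\bm{a}_v^H\bm{w}|^2\ge((D-x)^2+H^2)\tilde{\Gamma}$, where $\bm{h}_c=\sqrt{\beta_0/(x^2+H^2)}\,e^{-j2\pi\sqrt{x^2+H^2}/\lambda}\bm{a}_u$ and $\bm{a}_u,\bm{a}_v$ are the array response vectors $[1,e^{j\pi\sin\theta},\dots,e^{j\pi(M-1)\sin\theta}]^T$ with $\sin\theta=H/\sqrt{x^2+H^2}$ (user) and $\sin\theta=H/\sqrt{(D-x)^2+H^2}$ (target). Outside sensing periods the precoder is maximum ratio transmission toward the user, giving SNR $\gamma_0MP_{\max}/(x^2+H^2)$. *)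

From Stdlib Require Import Reals Lra ZArith ClassicalEpsilon.
From Coquelicot Require Import Coquelicot.
Open Scope R_scope.

Definition expj (th : R) : C := (cos th, sin th).

Fixpoint csum (f : nat -> C) (n : nat) : C :=
  match n with
  | O => RtoC 0
  | S k => Cplus (csum f k) (f k)
  end.

Fixpoint rsum (f : nat -> R) (n : nat) : R :=
  match n with
  | O => 0
  | S k => rsum f k + f k
  end.

(** Vectors of C^M are functions nat -> C (only the indices 0..M-1 matter). *)
Definition herm (M : nat) (a w : nat -> C) : C :=
  csum (fun m => Cmult (Cconj (a m)) (w m)) M.

Definition normsq (M : nat) (w : nat -> C) : R :=
  rsum (fun m => (Cmod (w m))^2) M.

(** Half-wavelength ULA response [1, e^{j pi s}, ..., e^{j pi (M-1) s}], s = sin theta. *)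
Definition arr (s : R) (m : nat) : C := expj (PI * INR m * s).

Definition a_u (H x : R) : nat -> C := arr (H / sqrt (x^2 + H^2)).
Definition a_v (H D x : R) : nat -> C := arr (H / sqrt ((D - x)^2 + H^2)).

Definition h_c (H beta0 lam x : R) (m : nat) : C :=
  Cmult (Cmult (RtoC (sqrt (beta0 / (x^2 + H^2))))
               (expj (- (2 * PI * sqrt (x^2 + H^2) / lam))))
        (a_u H x m).

Definition snr_set (M : nat) (H D Pmax sigma2 beta0 lam Gt x : R) (g : R) : Prop :=
  exists w : nat -> C,
    normsq M w <= Pmax /\
    (Cmod (herm M (a_v H D x) w))^2 >= ((D - x)^2 + H^2) * Gt /\
    g = (Cmod (herm M (h_c H beta0 lam x) w))^2 / sigma2.

Definition gamma_star (M : nat) (H D Pmax sigma2 beta0 lam Gt x : R) : R :=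
  real (Lub_Rbar (snr_set M H D Pmax sigma2 beta0 lam Gt x)).

Definition log2 (y : R) : R := ln y / ln 2.

Definition sensing (L : nat) (tau0 : R) (ts : nat -> R) (t : R) : Prop :=
  exists l : nat, (1 <= l <= L)%nat /\ ts l <= t <= ts l + tau0.

Definition rate (M L : nat) (H D Pmax sigma2 beta0 lam Gt tau0 : R)
    (x : R -> R) (ts : nat -> R) (t : R) : R :=
  if excluded_middle_informative (sensing L tau0 ts t)
  then log2 (1 + gamma_star M H D Pmax sigma2 beta0 lam Gt (x t))
  else log2 (1 + (beta0 / sigma2) * INR M * Pmax / ((x t)^2 + H^2)).

Definition objective (M L : nat) (H D Pmax sigma2 beta0 lam Gt tau0 Tf : R)
    (x : R -> R) (ts : nat -> R) : R :=
  RInt (rate M L H D Pmax sigma2 beta0 lam Gt tau0 x ts) 0 (INR L * Tf) / (INR L * Tf).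

(** Feasibility for (SP2). The speed constraint |x'(t)| <= Vmax is expressed as
    Vmax-Lipschitz continuity on [0,T]. *)
Definition feasible (M L : nat) (H D Pmax Gt tau0 Tf Vmax : R)
    (x : R -> R) (ts : nat -> R) : Prop :=
  (forall s u, 0 <= s <= INR L * Tf -> 0 <= u <= INR L * Tf ->
     Rabs (x s - x u) <= Vmax * Rabs (s - u)) /\
  (forall l : nat, (1 <= l <= L)%nat ->
     (INR l - 1) * Tf <= ts l /\ ts l + tau0 <= INR l * Tf /\
     (forall s, ts l <= s <= ts l + tau0 -> x s = x (ts l)) /\
     INR M * Pmax / ((D - x (ts l))^2 + H^2) >= Gt).

Definition optimal (M L : nat) (H D Pmax sigma2 beta0 lam Gt tau0 Tf Vmax : R)
    (x : R -> R) (ts : nat -> R) : Prop :=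
  feasible M L H D Pmax Gt tau0 Tf Vmax x ts /\
  forall (x' : R -> R) (ts' : nat -> R),
    feasible M L H D Pmax Gt tau0 Tf Vmax x' ts' ->
    objective M L H D Pmax sigma2 beta0 lam Gt tau0 Tf x' ts' <=
    objective M L H D Pmax sigma2 beta0 lam Gt tau0 Tf x ts.

(* Outside its sensing window, a UAV flying at speed at most [Vmax] stays at distance at least
   [|p| - Vmax * (time to the window)] from the user, where [p] is its hovering point, and the
   communication rate decreases with that distance. Integrating this bound, a frame whose window
   hovers at [p] earns at most
     [F p = tau0 * log2 (1 + gamma* p) + (integral over [0, Tf - tau0] of the rate reached by
      flying straight toward the user from [p])],
   since that rate increases along the flight, so the flights before and after the window earn at
   most a single flight of the same total duration. The supremum of [F] over the hovering points
   meeting the sensing requirement is attained: [F p] is the supremum over admissible precoders [w]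
   of a function of [(p, w)] that is continuous on the compact set of admissible pairs. For a
   maximiser [p], the UAV that hovers at [p] around every even multiple of [Tf], sensing in the two
   adjacent frames, and in between flies toward the user and back at full speed earns [F p] in every
   frame; its trajectory is symmetric about every even multiple of [Tf]. *)

From Stdlib Require Import Reals Lra Lia ZArith ClassicalEpsilon Classical.
From Coquelicot Require Import Coquelicot.
Open Scope R_scope.
Set Bullet Behavior "Strict Subproofs".

Definition lipschitz (K : R) (f : R -> R) : Prop :=
  forall u v, Rabs (f u - f v) <= K * Rabs (u - v).

Definition lipschitz_on (K a b : R) (f : R -> R) : Prop :=
  forall u v, a <= u <= b -> a <= v <= b -> Rabs (f u - f v) <= K * Rabs (u - v).

Lemma lipschitz_on_sub K a b c d f :
  a <= c -> d <= b -> lipschitz_on K a b f -> lipschitz_on K c d f.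
Proof. intros Hac Hdb Hf u v Hu Hv. apply Hf; lra. Qed.

Lemma lipschitz_continuity_pt K f x : 0 <= K -> lipschitz K f -> continuity_pt f x.
Proof.
  intros HK Hf eps Heps. exists (eps / (K + 1)). split.
  - apply Rdiv_lt_0_compat; lra.
  - intros y [_ Hy]. simpl in *. unfold R_dist in *.
    apply (Rle_lt_trans _ (K * Rabs (y - x))); [apply Hf |].
    apply (Rle_lt_trans _ ((K + 1) * Rabs (y - x))).
    + apply Rmult_le_compat_r; [apply Rabs_pos | lra].
    + apply (Rmult_lt_compat_l (K + 1)) in Hy; [|lra].
      replace ((K + 1) * (eps / (K + 1))) with eps in Hy by (field; lra). exact Hy.
Qed.

Lemma lipschitz_ex_RInt K f a b : 0 <= K -> lipschitz K f -> ex_RInt f a b.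
Proof.
  intros HK Hf. apply (ex_RInt_continuous (V := R_CompleteNormedModule)). intros z _.
  apply continuity_pt_filterlim, (lipschitz_continuity_pt K); assumption.
Qed.

Lemma lipschitz_comp_shift K f c : lipschitz K f -> lipschitz K (fun t => f (t - c)).
Proof. intros Hf u v. replace (u - v) with ((u - c) - (v - c)) by ring. apply Hf. Qed.

Lemma lipschitz_comp_reflect K f s : lipschitz K f -> lipschitz K (fun t => f (s - t)).
Proof.
  intros Hf u v. replace (Rabs (u - v)) with (Rabs ((s - u) - (s - v))); [apply Hf |].
  rewrite <- Rabs_Ropp. f_equal. ring.
Qed.

Definition clamp (a b t : R) : R := Rmax a (Rmin t b).

Lemma clamp_in a b t : a <= b -> a <= clamp a b t <= b.
Proof.
  intros Hab. unfold clamp. split; [apply Rmax_l | apply Rmax_lub; [lra | apply Rmin_r]].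
Qed.

Lemma clamp_id a b t : a <= t <= b -> clamp a b t = t.
Proof. intros Ht. unfold clamp. rewrite Rmin_left, Rmax_right; lra. Qed.

Lemma clamp_lipschitz a b : lipschitz 1 (clamp a b).
Proof.
  intros u v. rewrite Rmult_1_l. unfold clamp, Rmin. destruct (Rle_dec u b), (Rle_dec v b);
  unfold Rmax; repeat match goal with |- context [Rle_dec ?x ?y] => destruct (Rle_dec x y) end;
  split_Rabs; lra.
Qed.

(* Extending [f] by constants outside [a, b] makes it globally Lipschitz. *)
Lemma lipschitz_on_ex_RInt K a b f : 0 <= K -> a <= b -> lipschitz_on K a b f -> ex_RInt f a b.
Proof.
  intros HK Hab Hf.
  apply (ex_RInt_ext (fun t => f (clamp a b t))).
  { intros t Ht. rewrite Rmin_left, Rmax_right in Ht by lra. rewrite clamp_id; lra. }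
  apply (lipschitz_ex_RInt K); [exact HK |]. intros u v.
  apply (Rle_trans _ (K * Rabs (clamp a b u - clamp a b v))).
  - apply Hf; apply clamp_in; lra.
  - apply Rmult_le_compat_l; [exact HK |]. rewrite <- (Rmult_1_l (Rabs (u - v))). apply clamp_lipschitz.
Qed.

Lemma Rmax0_lipschitz a b : Rabs (Rmax a 0 - Rmax b 0) <= Rabs (a - b).
Proof. unfold Rmax; destruct (Rle_dec a 0), (Rle_dec b 0); split_Rabs; lra. Qed.

(* From [ln x <= x - 1] applied to [x = u / v]. *)
Lemma ln_lipschitz_ge1 u v : 1 <= u -> 1 <= v -> Rabs (ln u - ln v) <= Rabs (u - v).
Proof.
  assert (Hle : forall a b, 1 <= b <= a -> ln a - ln b <= a - b).
  { intros a b Hab. rewrite <- ln_div by lra.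
    pose proof (exp_ineq1_le (ln (a / b))) as Hexp.
    rewrite exp_ln in Hexp by (apply Rdiv_lt_0_compat; lra).
    enough (a / b <= 1 + (a - b)) by lra.
    apply (Rmult_le_reg_r b); [lra |]. field_simplify; [nra | lra]. }
  intros Hu Hv. destruct (Rle_dec v u).
  - pose proof (ln_le v u ltac:(lra) ltac:(lra)).
    rewrite !Rabs_right by lra. apply Hle; lra.
  - pose proof (ln_le u v ltac:(lra) ltac:(lra)).
    rewrite !Rabs_left1 by lra. pose proof (Hle v u ltac:(lra)). lra.
Qed.

Lemma RInt_comp_shift (f : R -> R) a b c :
  ex_RInt f (a - c) (b - c) -> RInt (fun t => f (t - c)) a b = RInt f (a - c) (b - c).
Proof.
  intros Hf. replace (a - c) with (1 * a + - c) by ring. replace (b - c) with (1 * b + - c) by ring.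
  rewrite <- (RInt_comp_lin (V := R_CompleteNormedModule) f 1 (- c) a b) by
    (replace (1 * a + - c) with (a - c) by ring; replace (1 * b + - c) with (b - c) by ring; exact Hf).
  apply RInt_ext. intros t _. replace (1 * t + - c) with (t - c) by ring.
  symmetry. apply (scal_one (V := R_NormedModule)).
Qed.

Lemma RInt_comp_reflect (f : R -> R) a b s :
  ex_RInt f (s - b) (s - a) -> RInt (fun t => f (s - t)) a b = RInt f (s - b) (s - a).
Proof.
  intros Hf. apply is_RInt_unique.
  assert (HI := is_RInt_swap _ _ _ _ (RInt_correct _ _ _ Hf)).
  replace (s - a) with (-1 * a + s) in HI at 1 by ring.
  replace (s - b) with (-1 * b + s) in HI at 1 by ring.
  apply is_RInt_comp_lin, is_RInt_opp in HI. rewrite opp_opp in HI.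
  refine (is_RInt_ext _ _ _ _ _ _ HI). intros t _.
  change (- (-1 * f (-1 * t + s)) = f (s - t)). replace (-1 * t + s) with (s - t) by ring. ring.
Qed.

Lemma rsum_ext (f g : nat -> R) n : (forall m, (m < n)%nat -> f m = g m) -> rsum f n = rsum g n.
Proof.
  induction n as [|n IH]; intros Hfg; simpl; [reflexivity |].
  rewrite IH, Hfg; [reflexivity | lia | intros; apply Hfg; lia].
Qed.

Lemma rsum_le (f g : nat -> R) n : (forall m, (m < n)%nat -> f m <= g m) -> rsum f n <= rsum g n.
Proof.
  induction n as [|n IH]; intros Hfg; simpl; [lra |].
  pose proof (Hfg n ltac:(lia)). enough (rsum f n <= rsum g n) by lra.
  apply IH. intros; apply Hfg; lia.
Qed.

Lemma rsum_const c n : rsum (fun _ => c) n = INR n * c.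
Proof. induction n as [|n IH]; simpl rsum; [simpl; ring | rewrite IH, S_INR; ring]. Qed.

Lemma rsum_nonneg (f : nat -> R) n : (forall m, 0 <= f m) -> 0 <= rsum f n.
Proof. intros Hf. induction n as [|n IH]; simpl; [lra | pose proof (Hf n); lra]. Qed.

Lemma rsum_ge_term (f : nat -> R) n m : (forall k, 0 <= f k) -> (m < n)%nat -> f m <= rsum f n.
Proof.
  intros Hf. induction n as [|n IH]; intros Hm; [lia |]. simpl.
  destruct (Nat.eq_dec m n) as [-> | Hne].
  - pose proof (rsum_nonneg f n Hf). lra.
  - pose proof (Hf n). specialize (IH ltac:(lia)). lra.
Qed.

Lemma csum_ext (f g : nat -> C) n : (forall m, (m < n)%nat -> f m = g m) -> csum f n = csum g n.
Proof.
  induction n as [|n IH]; intros Hfg; simpl; [reflexivity |].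
  rewrite IH, Hfg; [reflexivity | lia | intros; apply Hfg; lia].
Qed.

Lemma csum_const c n : csum (fun _ => RtoC c) n = RtoC (INR n * c).
Proof.
  induction n as [|n IH]; simpl csum.
  - apply injective_projections; simpl; ring.
  - rewrite IH, S_INR. apply injective_projections; simpl; ring.
Qed.

Lemma RInt_consecutive (r : R -> R) T n :
  (forall i, (i < n)%nat -> ex_RInt r (INR i * T) (INR (S i) * T)) ->
  ex_RInt r 0 (INR n * T) /\ RInt r 0 (INR n * T) = rsum (fun i => RInt r (INR i * T) (INR (S i) * T)) n.
Proof.
  induction n as [|n IH]; intros Hi.
  - replace (INR 0 * T) with 0 by (simpl; ring).
    split; [apply ex_RInt_point | apply (RInt_point (V := R_CompleteNormedModule))].
  - destruct IH as [IH1 IH2]; [intros; apply Hi; lia |].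
    assert (Hn := Hi n ltac:(lia)).
    split; [exact (ex_RInt_Chasles _ _ _ _ IH1 Hn) |].
    rewrite <- (RInt_Chasles (V := R_CompleteNormedModule) r 0 (INR n * T)) by assumption.
    simpl rsum. rewrite IH2. reflexivity.
Qed.

Lemma Lub_Rbar_is_lub (E : R -> Prop) x B :
  E x -> (forall y, E y -> y <= B) -> is_lub E (real (Lub_Rbar E)).
Proof.
  intros Hx HB. destruct (completeness E) as [m [Hub Hleast]]; [exists B; exact HB | exists x; exact Hx |].
  replace (Lub_Rbar E) with (Finite m); [split; assumption |].
  symmetry. apply is_lub_Rbar_unique. split.
  - intros y Hy. apply Hub, Hy.
  - intros [b | |] Hb; simpl; [apply Hleast; exact Hb | exact I | exact (Hb x Hx)].
Qed.

Lemma Rabs_le_sqrt y Q : y ^ 2 <= Q -> Rabs y <= sqrt Q.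
Proof. intros Hy. rewrite <- sqrt_Rsqr_abs, Rsqr_pow2. apply sqrt_le_1_alt, Hy. Qed.

(** * Sequences and sequential compactness *)

Lemma fun_choice {I X : Type} (P : I -> X -> Prop) :
  (forall n, exists x, P n x) -> exists u : I -> X, forall n, P n (u n).
Proof.
  intros HP. exists (fun n => proj1_sig (constructive_indefinite_description _ (HP n))).
  intros n. exact (proj2_sig (constructive_indefinite_description _ (HP n))).
Qed.

Lemma is_lim_seq_inv_succ : is_lim_seq (fun n => / (INR n + 1)) 0.
Proof.
  replace (Finite 0) with (Rbar_inv p_infty) by reflexivity.
  apply is_lim_seq_inv; [| discriminate].
  apply (is_lim_seq_plus _ _ p_infty 1 p_infty); [apply is_lim_seq_INR | apply is_lim_seq_const |].
  reflexivity.
Qed.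

Lemma is_lim_seq_comp_ex_derive (f : R -> R) (u : nat -> R) (l : R) :
  ex_derive f l -> is_lim_seq u l -> is_lim_seq (fun n => f (u n)) (f l).
Proof.
  intros Hf. apply is_lim_seq_continuous, continuity_pt_filterlim.
  apply (ex_derive_continuous (K := R_AbsRing) (V := R_NormedModule)), Hf.
Qed.

Definition strictly_increasing (phi : nat -> nat) : Prop := forall n, (phi n < phi (S n))%nat.

Lemma strictly_increasing_ge phi : strictly_increasing phi -> forall n, (n <= phi n)%nat.
Proof. intros Hphi n. induction n as [|n IH]; [lia | specialize (Hphi n); lia]. Qed.

Lemma strictly_increasing_comp phi psi :
  strictly_increasing phi -> strictly_increasing psi -> strictly_increasing (fun n => phi (psi n)).
Proof.
  intros Hphi Hpsi n. specialize (Hpsi n).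
  induction Hpsi as [|m _ IH]; [apply Hphi | specialize (Hphi m); lia].
Qed.

Lemma is_lim_seq_subseq_incr (u : nat -> R) (l : Rbar) phi :
  strictly_increasing phi -> is_lim_seq u l -> is_lim_seq (fun n => u (phi n)) l.
Proof. intros Hphi. apply is_lim_seq_subseq, eventually_subseq, Hphi. Qed.

Fixpoint nested_index (next : nat -> nat -> nat) (n : nat) : nat :=
  match n with
  | O => next O O
  | S k => next (S (nested_index next k)) (S k)
  end.

(* Picking the n-th index beyond the previous one, within [1/(n+1)] of [l]. *)
Lemma cluster_value_subseq (u : nat -> R) (l : R) :
  (forall N eps, 0 < eps -> exists p, (N <= p)%nat /\ Rabs (u p - l) < eps) ->
  exists phi, strictly_increasing phi /\ is_lim_seq (fun n => u (phi n)) l.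
Proof.
  intros Hl.
  assert (Hk : forall N k, exists p, (N <= p)%nat /\ Rabs (u p - l) < / (INR k + 1)).
  { intros N k. apply Hl, Rinv_0_lt_compat. pose proof (pos_INR k). lra. }
  destruct (fun_choice (fun Nk p => (fst Nk <= p)%nat /\ Rabs (u p - l) < / (INR (snd Nk) + 1)))
    as [next Hnext].
  { intros [N k]. apply Hk. }
  set (phi := nested_index (fun N k => next (N, k))).
  assert (Hphi : forall n, Rabs (u (phi n) - l) < / (INR n + 1)).
  { intros [|n]; [exact (proj2 (Hnext (0, 0)%nat)) | exact (proj2 (Hnext (_, S n)))]. }
  exists phi. split.
  - intros n. exact (proj1 (Hnext (S (phi n), S n))).
  - apply (is_lim_seq_le_le (fun n => l - / (INR n + 1)) _ (fun n => l + / (INR n + 1))).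
    + intros n. specialize (Hphi n). split_Rabs; lra.
    + replace (Finite l) with (Finite (l - 0)) by (f_equal; ring).
      apply is_lim_seq_minus'; [apply is_lim_seq_const | apply is_lim_seq_inv_succ].
    + replace (Finite l) with (Finite (l + 0)) by (f_equal; ring).
      apply is_lim_seq_plus'; [apply is_lim_seq_const | apply is_lim_seq_inv_succ].
Qed.

Lemma bounded_convergent_subseq (u : nat -> R) B :
  (forall n, Rabs (u n) <= B) ->
  exists phi (l : R), strictly_increasing phi /\ is_lim_seq (fun n => u (phi n)) l.
Proof.
  intros HB.
  destruct (Bolzano_Weierstrass u (fun c => -B <= c <= B) (compact_P3 (-B) B)) as [l Hl].
  { intros n. specialize (HB n). split_Rabs; lra. }
  destruct (cluster_value_subseq u l) as [phi Hphi]; [| exists phi, l; exact Hphi].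
  intros N eps Heps. destruct (Hl (fun y => Rabs (y - l) < eps) N) as [p Hp]; [| exists p; exact Hp].
  exists (mkposreal eps Heps). intros y Hy. exact Hy.
Qed.

Lemma bounded_common_convergent_subseq (k : nat) (u : nat -> nat -> R) B :
  (forall n i, (i < k)%nat -> Rabs (u n i) <= B) ->
  exists phi (l : nat -> R), strictly_increasing phi /\
    forall i, (i < k)%nat -> is_lim_seq (fun n => u (phi n) i) (l i).
Proof.
  revert u. induction k as [|k IH]; intros u HB.
  - exists (fun n => n), (fun _ => 0). split; [intros n; lia | intros i Hi; lia].
  - destruct (IH u) as [phi [l [Hphi Hl]]]; [intros n i Hi; apply HB; lia |].
    destruct (bounded_convergent_subseq (fun n => u (phi n) k) B) as [psi [lk [Hpsi Hlk]]].
    { intros n. apply HB. lia. }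
    exists (fun n => phi (psi n)), (fun i => if Nat.eqb i k then lk else l i).
    split; [apply strictly_increasing_comp; assumption |].
    intros i Hi. destruct (Nat.eqb_spec i k) as [-> | Hik]; [exact Hlk |].
    apply (is_lim_seq_subseq_incr (fun n => u (phi n) i)); [exact Hpsi | apply Hl; lia].
Qed.

Section SeqCompactMax.
Variables (X : Type) (K : X -> Prop) (f : X -> R).
Hypothesis K_seq_compact : forall u : nat -> X, (forall n, K (u n)) ->
  exists phi x, strictly_increasing phi /\ K x /\ is_lim_seq (fun n => f (u (phi n))) (f x).

Lemma seq_compact_bounded : exists B, forall y, K y -> f y <= B.
Proof.
  apply NNPP. intros Hunb.
  assert (Hbig : forall n : nat, exists y, K y /\ INR n < f y).
  { intros n. apply NNPP. intros Hn. apply Hunb. exists (INR n). intros y Hy.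
    apply Rnot_lt_le. intros Hlt. apply Hn. exists y. split; assumption. }
  destruct (fun_choice _ Hbig) as [u Hu].
  destruct (K_seq_compact u) as [phi [x [Hphi [_ Hlim]]]]; [intros n; apply Hu |].
  assert (Hinf : is_lim_seq (fun n => f (u (phi n))) p_infty).
  { apply (is_lim_seq_le_p_loc INR); [| apply is_lim_seq_INR].
    exists O. intros n _. apply Rlt_le, (Rle_lt_trans _ (INR (phi n))); [| apply Hu].
    apply le_INR, strictly_increasing_ge, Hphi. }
  apply is_lim_seq_unique in Hlim, Hinf. rewrite Hlim in Hinf. discriminate.
Qed.

Lemma seq_compact_attains_max x0 : K x0 -> exists x, K x /\ forall y, K y -> f y <= f x.
Proof.
  intros Hx0. destruct seq_compact_bounded as [B HB].
  destruct (completeness (fun v => exists y, K y /\ v = f y)) as [s [Hub Hleast]].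
  { exists B. intros v [y [Hy ->]]. apply HB, Hy. }
  { exists (f x0), x0. split; [exact Hx0 | reflexivity]. }
  assert (Hnear : forall n : nat, exists y, K y /\ s - / (INR n + 1) < f y).
  { intros n. apply NNPP. intros Hn.
    assert (s <= s - / (INR n + 1)).
    { apply Hleast. intros v [y [Hy ->]]. apply Rnot_lt_le. intros Hlt. apply Hn. exists y. auto. }
    assert (0 < / (INR n + 1)) by (apply Rinv_0_lt_compat; pose proof (pos_INR n); lra).
    lra. }
  destruct (fun_choice _ Hnear) as [u Hu].
  destruct (K_seq_compact u) as [phi [x [Hphi [Hx Hlim]]]]; [intros n; apply Hu |].
  exists x. split; [exact Hx |].
  assert (Hs : s <= f x).
  { apply (is_lim_seq_le (fun n => s - / (INR (phi n) + 1)) (fun n => f (u (phi n))) s (f x)).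
    - intros n. apply Rlt_le, Hu.
    - replace (Finite s) with (Finite (s - 0)) by (f_equal; ring).
      apply is_lim_seq_minus'; [apply is_lim_seq_const |].
      apply (is_lim_seq_subseq_incr (fun n => / (INR n + 1))); [exact Hphi | apply is_lim_seq_inv_succ].
    - exact Hlim. }
  intros y Hy. apply (Rle_trans _ s); [apply Hub; exists y; auto | exact Hs].
Qed.

End SeqCompactMax.

Lemma Cmod_expj th : Cmod (expj th) = 1.
Proof.
  unfold Cmod, expj. simpl. rewrite Rmult_1_r, Rmult_1_r, Rplus_comm.
  change (sin th * sin th + cos th * cos th) with ((sin th)² + (cos th)²). rewrite sin2_cos2. apply sqrt_1.
Qed.

Lemma Cconj_expj_mult th c : Cmult (Cconj (expj th)) (Cmult (RtoC c) (expj th)) = RtoC c.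
Proof.
  pose proof (sin2_cos2 th) as E. unfold Rsqr in E.
  unfold expj, RtoC, Cconj. apply injective_projections; simpl.
  - transitivity (c * (sin th * sin th + cos th * cos th)); [ring | rewrite E; ring].
  - ring.
Qed.

Definition is_lim_Cseq (z : nat -> C) (l : C) : Prop :=
  is_lim_seq (fun n => fst (z n)) (fst l) /\ is_lim_seq (fun n => snd (z n)) (snd l).

Lemma is_lim_Cseq_const c : is_lim_Cseq (fun _ => c) c.
Proof. split; apply is_lim_seq_const. Qed.

Lemma is_lim_Cseq_plus z1 z2 l1 l2 : is_lim_Cseq z1 l1 -> is_lim_Cseq z2 l2 ->
  is_lim_Cseq (fun n => Cplus (z1 n) (z2 n)) (Cplus l1 l2).
Proof. intros [A1 B1] [A2 B2]. split; apply is_lim_seq_plus'; assumption. Qed.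

Lemma is_lim_Cseq_mult z1 z2 l1 l2 : is_lim_Cseq z1 l1 -> is_lim_Cseq z2 l2 ->
  is_lim_Cseq (fun n => Cmult (z1 n) (z2 n)) (Cmult l1 l2).
Proof.
  intros [A1 B1] [A2 B2]. split; simpl.
  - apply is_lim_seq_minus'; apply is_lim_seq_mult'; assumption.
  - apply is_lim_seq_plus'; apply is_lim_seq_mult'; assumption.
Qed.

Lemma is_lim_Cseq_conj z l : is_lim_Cseq z l -> is_lim_Cseq (fun n => Cconj (z n)) (Cconj l).
Proof. intros [A B]. split; [exact A | apply (is_lim_seq_opp _ (snd l)), B]. Qed.

Lemma is_lim_Cseq_csum (f : nat -> nat -> C) (g : nat -> C) M :
  (forall m, (m < M)%nat -> is_lim_Cseq (fun n => f n m) (g m)) ->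
  is_lim_Cseq (fun n => csum (f n) M) (csum g M).
Proof.
  induction M as [|M IH]; intros Hfg; simpl; [apply is_lim_Cseq_const |].
  apply is_lim_Cseq_plus; [apply IH; intros; apply Hfg; lia | apply Hfg; lia].
Qed.

Lemma Cmod_sqr z : Cmod z ^ 2 = fst z ^ 2 + snd z ^ 2.
Proof. unfold Cmod. rewrite pow2_sqrt; [reflexivity | nra]. Qed.

Lemma is_lim_seq_Cmod_sqr z l : is_lim_Cseq z l -> is_lim_seq (fun n => Cmod (z n) ^ 2) (Cmod l ^ 2).
Proof.
  intros [A B]. rewrite Cmod_sqr.
  apply (is_lim_seq_ext (fun n => fst (z n) ^ 2 + snd (z n) ^ 2));
    [intros n; rewrite Cmod_sqr; reflexivity |].
  apply is_lim_seq_plus'; simpl; repeat apply is_lim_seq_mult'; try apply is_lim_seq_const; assumption.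
Qed.

Lemma is_lim_Cseq_herm M (a w : nat -> nat -> C) a0 w0 :
  (forall m, (m < M)%nat -> is_lim_Cseq (fun n => a n m) (a0 m)) ->
  (forall m, (m < M)%nat -> is_lim_Cseq (fun n => w n m) (w0 m)) ->
  is_lim_Cseq (fun n => herm M (a n) (w n)) (herm M a0 w0).
Proof.
  intros Ha Hw. apply is_lim_Cseq_csum. intros m Hm.
  apply is_lim_Cseq_mult; [apply is_lim_Cseq_conj, Ha | apply Hw]; exact Hm.
Qed.

Lemma is_lim_seq_normsq M (w : nat -> nat -> C) w0 :
  (forall m, (m < M)%nat -> is_lim_Cseq (fun n => w n m) (w0 m)) ->
  is_lim_seq (fun n => normsq M (w n)) (normsq M w0).
Proof.
  unfold normsq. induction M as [|M IH]; intros Hw; simpl; [apply is_lim_seq_const |].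
  apply is_lim_seq_plus'; [apply IH; intros; apply Hw; lia | apply is_lim_seq_Cmod_sqr, Hw; lia].
Qed.

(** * Geometry of the hovering trajectory *)

Section DistanceToMultiples.
Variable c : R.
Hypothesis c_pos : 0 < c.

(* [up (t / c - 1/2)] is an integer nearest to [t / c]. *)
Definition dist_mult (t : R) : R := Rabs (t - c * IZR (up (t / c - / 2))).

Lemma dist_mult_le_half t : dist_mult t <= c / 2.
Proof.
  unfold dist_mult. destruct (archimed (t / c - / 2)) as [A1 A2].
  set (k := IZR (up (t / c - / 2))) in *.
  replace (t - c * k) with (c * (t / c - k)) by (field; lra).
  rewrite Rabs_mult, Rabs_right by lra.
  assert (Rabs (t / c - k) <= / 2) by (split_Rabs; lra). nra.
Qed.

Lemma dist_distinct_mult t (j k : Z) : j <> k -> c <= Rabs (t - c * IZR j) + Rabs (t - c * IZR k).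
Proof.
  intros Hjk. assert (Hsep : 1 <= Rabs (IZR j - IZR k)).
  { rewrite Z_R_minus. destruct (Z.lt_total j k) as [Hlt | [Heq | Hgt]]; [| contradiction |].
    - assert (IZR (j - k) <= -1) by (apply IZR_le; lia). rewrite Rabs_left1; lra.
    - assert (1 <= IZR (j - k)) by (apply IZR_le; lia). rewrite Rabs_right; lra. }
  assert (Htri : Rabs (c * (IZR j - IZR k)) <= Rabs (t - c * IZR j) + Rabs (t - c * IZR k)).
  { replace (c * (IZR j - IZR k)) with ((t - c * IZR k) - (t - c * IZR j)) by ring.
    split_Rabs; lra. }
  rewrite Rabs_mult, (Rabs_right c) in Htri by lra. nra.
Qed.

Lemma dist_mult_le t (j : Z) : dist_mult t <= Rabs (t - c * IZR j).
Proof.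
  destruct (Z.eq_dec (up (t / c - / 2)) j) as [E | E].
  - unfold dist_mult. rewrite E. lra.
  - pose proof (dist_distinct_mult t _ _ E). pose proof (dist_mult_le_half t). unfold dist_mult in *. lra.
Qed.

Lemma dist_mult_eq t (j : Z) : Rabs (t - c * IZR j) <= c / 2 -> dist_mult t = Rabs (t - c * IZR j).
Proof.
  intros Hj. apply Rle_antisym; [apply dist_mult_le |].
  destruct (Z.eq_dec (up (t / c - / 2)) j) as [E | E].
  - unfold dist_mult. rewrite E. lra.
  - pose proof (dist_distinct_mult t _ _ E). unfold dist_mult. lra.
Qed.

Lemma dist_mult_lipschitz s u : Rabs (dist_mult s - dist_mult u) <= Rabs (s - u).
Proof.
  assert (K : forall a b, dist_mult a <= dist_mult b + Rabs (a - b)).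
  { intros a b. apply (Rle_trans _ _ _ (dist_mult_le a (up (b / c - / 2)))). unfold dist_mult.
    replace (a - c * IZR (up (b / c - / 2))) with ((a - b) + (b - c * IZR (up (b / c - / 2)))) by ring.
    apply (Rle_trans _ _ _ (Rabs_triang _ _)). lra. }
  pose proof (K s u). pose proof (K u s). rewrite (Rabs_minus_sym u s) in *. split_Rabs; lra.
Qed.

(* Reflection [t |-> c m - t] maps multiples of [c] onto multiples of [c]. *)
Lemma dist_mult_reflect t1 t2 (m : Z) : t1 + t2 = c * IZR m -> dist_mult t1 = dist_mult t2.
Proof.
  assert (K : forall a b, a + b = c * IZR m -> dist_mult b <= dist_mult a).
  { intros a b Hab. apply (Rle_trans _ _ _ (dist_mult_le b (m - up (a / c - / 2)))). unfold dist_mult.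
    rewrite minus_IZR, <- Rabs_Ropp. right. f_equal. nra. }
  intros Ht. apply Rle_antisym; apply K; lra.
Qed.

End DistanceToMultiples.

Definition window_dist (s tau t : R) : R := Rmax (Rmax (s - t) (t - (s + tau))) 0.

Lemma window_dist_cases s tau t : 0 <= tau ->
  (t <= s -> window_dist s tau t = s - t) /\
  (s <= t <= s + tau -> window_dist s tau t = 0) /\
  (s + tau <= t -> window_dist s tau t = t - (s + tau)).
Proof.
  intros Htau. unfold window_dist, Rmax.
  destruct (Rle_dec (s - t) (t - (s + tau)));
  match goal with |- context [Rle_dec ?x ?y] => destruct (Rle_dec x y) end; repeat split; intros; lra.
Qed.

Definition move_toward0 (p d : R) : R := if Rle_dec 0 p then Rmax (p - d) 0 else Rmin (p + d) 0.

Lemma move_toward0_0 p : move_toward0 p 0 = p.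
Proof.
  unfold move_toward0, Rmax, Rmin.
  destruct (Rle_dec 0 p);
  repeat match goal with |- context [Rle_dec ?x ?y] => destruct (Rle_dec x y) end; lra.
Qed.

Lemma Rabs_move_toward0 p d : 0 <= d -> Rabs (move_toward0 p d) = Rmax (Rabs p - d) 0.
Proof.
  intros Hd. unfold move_toward0, Rmax, Rmin.
  destruct (Rle_dec 0 p); repeat match goal with |- context [Rle_dec ?x ?y] => destruct (Rle_dec x y) end;
  split_Rabs; lra.
Qed.

Lemma move_toward0_lipschitz p : lipschitz 1 (move_toward0 p).
Proof.
  intros d e. rewrite Rmult_1_l. unfold move_toward0, Rmax, Rmin.
  destruct (Rle_dec 0 p); repeat match goal with |- context [Rle_dec ?x ?y] => destruct (Rle_dec x y) end;
  split_Rabs; lra.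
Qed.

Lemma ln2_pos : 0 < ln 2.
Proof. rewrite <- ln_1. apply ln_increasing; lra. Qed.

Lemma log2_le a b : 0 < a -> a <= b -> log2 a <= log2 b.
Proof.
  intros Ha Hab. unfold log2, Rdiv. apply Rmult_le_compat_r.
  - apply Rlt_le, Rinv_0_lt_compat, ln2_pos.
  - apply ln_le; assumption.
Qed.

Lemma log2_le_Rpower a c : 0 < a -> log2 a <= c -> a <= Rpower 2 c.
Proof.
  intros Ha Hc. pose proof ln2_pos. apply Rnot_lt_le. intros Hlt.
  apply ln_increasing in Hlt; [| apply exp_pos]. unfold Rpower in Hlt. rewrite ln_exp in Hlt.
  unfold log2 in Hc. apply (Rmult_le_compat_r (ln 2)) in Hc; [| lra].
  replace (ln a / ln 2 * ln 2) with (ln a) in Hc by (field; lra). lra.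
Qed.

Lemma log2_Rpower c : log2 (Rpower 2 c) = c.
Proof. unfold log2. rewrite ln_Rpower. field. apply Rgt_not_eq, ln2_pos. Qed.

Lemma inv_sqr_plus_lipschitz H y z : 0 < H ->
  Rabs (/ (y ^ 2 + H ^ 2) - / (z ^ 2 + H ^ 2)) <= / H ^ 3 * Rabs (y - z).
Proof.
  intros HH.
  set (Y := y ^ 2 + H ^ 2). set (Z := z ^ 2 + H ^ 2).
  assert (HY : H ^ 2 <= Y) by (unfold Y; nra). assert (HZ : H ^ 2 <= Z) by (unfold Z; nra).
  assert (HyY : 2 * Rabs y * H <= Y)
    by (unfold Y; pose proof (pow2_ge_0 (Rabs y - H)); rewrite <- (pow2_abs y); nra).
  assert (HzZ : 2 * Rabs z * H <= Z)
    by (unfold Z; pose proof (pow2_ge_0 (Rabs z - H)); rewrite <- (pow2_abs z); nra).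
  replace (/ Y - / Z) with ((z - y) * (z + y) / (Y * Z)) by (unfold Y, Z; field; split; nra).
  assert (H3 : 0 < H ^ 3) by (apply pow_lt; lra).
  assert (HYZ : 0 < Y * Z) by (assert (0 < H ^ 2) by (apply pow_lt; lra); nra).
  assert (Hs : Rabs (z + y) * H ^ 3 <= Y * Z).
  { pose proof (Rabs_triang z y). pose proof (Rabs_pos y). pose proof (Rabs_pos z).
    replace (H ^ 3) with (H * H ^ 2) by ring. nra. }
  unfold Rdiv. rewrite !Rabs_mult, Rabs_inv, (Rabs_right (Y * Z)) by lra.
  rewrite (Rabs_minus_sym z y).
  apply (Rmult_le_reg_r (H ^ 3 * (Y * Z))); [apply Rmult_lt_0_compat; assumption |].
  replace (Rabs (y - z) * Rabs (z + y) * / (Y * Z) * (H ^ 3 * (Y * Z)))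
    with (Rabs (y - z) * (Rabs (z + y) * H ^ 3)) by (field; repeat split; nra).
  replace (/ H ^ 3 * Rabs (y - z) * (H ^ 3 * (Y * Z))) with (Rabs (y - z) * (Y * Z))
    by (field; repeat split; nra).
  apply Rmult_le_compat_l; [apply Rabs_pos | exact Hs].
Qed.

Definition snr_rate (A H y : R) : R := log2 (1 + A / (y ^ 2 + H ^ 2)).

Section SnrRate.
Variables (A H : R).
Hypotheses (A_nonneg : 0 <= A) (H_pos : 0 < H).

Lemma snr_ratio_nonneg y : 0 <= A / (y ^ 2 + H ^ 2).
Proof. apply Rmult_le_pos; [exact A_nonneg | apply Rlt_le, Rinv_0_lt_compat; nra]. Qed.

Lemma snr_rate_lip_nonneg : 0 <= A / (H ^ 3 * ln 2).
Proof.
  apply Rmult_le_pos; [exact A_nonneg |].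
  apply Rlt_le, Rinv_0_lt_compat, Rmult_lt_0_compat; [apply pow_lt, H_pos | apply ln2_pos].
Qed.

Lemma snr_rate_lipschitz y z :
  Rabs (snr_rate A H y - snr_rate A H z) <= A / (H ^ 3 * ln 2) * Rabs (y - z).
Proof.
  pose proof ln2_pos. pose proof (snr_ratio_nonneg y). pose proof (snr_ratio_nonneg z).
  unfold snr_rate, log2.
  replace (ln (1 + A / (y ^ 2 + H ^ 2)) / ln 2 - ln (1 + A / (z ^ 2 + H ^ 2)) / ln 2)
    with ((ln (1 + A / (y ^ 2 + H ^ 2)) - ln (1 + A / (z ^ 2 + H ^ 2))) * / ln 2) by (field; lra).
  rewrite Rabs_mult, (Rabs_right (/ ln 2)) by (apply Rle_ge, Rlt_le, Rinv_0_lt_compat; lra).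
  apply (Rle_trans _ (A * (/ H ^ 3 * Rabs (y - z)) * / ln 2)).
  - apply Rmult_le_compat_r; [apply Rlt_le, Rinv_0_lt_compat; lra |].
    eapply Rle_trans; [apply ln_lipschitz_ge1; lra |].
    replace (1 + A / (y ^ 2 + H ^ 2) - (1 + A / (z ^ 2 + H ^ 2)))
      with (A * (/ (y ^ 2 + H ^ 2) - / (z ^ 2 + H ^ 2))) by (unfold Rdiv; ring).
    rewrite Rabs_mult, Rabs_right by lra.
    apply Rmult_le_compat_l; [exact A_nonneg | apply inv_sqr_plus_lipschitz, H_pos].
  - right. field. lra.
Qed.

Lemma snr_rate_antitone y z : Rabs y <= Rabs z -> snr_rate A H z <= snr_rate A H y.
Proof.
  intros Hyz. pose proof (snr_ratio_nonneg z). unfold snr_rate.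
  apply log2_le; [lra |]. apply Rplus_le_compat_l, Rmult_le_compat_l; [exact A_nonneg |].
  apply Rinv_le_contravar; [pose proof (pow2_ge_0 y); pose proof (pow_lt H 2 H_pos); lra |].
  rewrite <- (pow2_abs y), <- (pow2_abs z). pose proof (Rabs_pos y). apply Rplus_le_compat_r. nra.
Qed.

End SnrRate.

Section Approach.
Variables (A H V : R).
Hypotheses (A_nonneg : 0 <= A) (H_pos : 0 < H) (V_nonneg : 0 <= V).

(* Rate [u] time units after leaving the hovering point [p] straight toward the user at speed [V];
   no trajectory of speed at most [V] does better. *)
Definition approach_rate (p u : R) : R := snr_rate A H (Rmax (Rabs p - V * u) 0).

Definition approach_gain (p a : R) : R := RInt (approach_rate p) 0 a.

Lemma approach_rate_ge p u y : Rabs (y - p) <= V * u -> snr_rate A H y <= approach_rate p u.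
Proof.
  intros Hy. apply snr_rate_antitone; [exact A_nonneg | exact H_pos |].
  rewrite Rabs_right by (apply Rle_ge, Rmax_r). apply Rmax_lub; [| apply Rabs_pos].
  pose proof (Rabs_triang_inv p y). rewrite Rabs_minus_sym in Hy. lra.
Qed.

Lemma approach_rate_le p u y : Rabs y <= Rmax (Rabs p - V * u) 0 -> approach_rate p u <= snr_rate A H y.
Proof.
  intros Hy. apply snr_rate_antitone; [exact A_nonneg | exact H_pos |].
  rewrite (Rabs_right (Rmax _ 0)) by (apply Rle_ge, Rmax_r). exact Hy.
Qed.

Lemma approach_rate_lipschitz p : lipschitz (A / (H ^ 3 * ln 2) * V) (approach_rate p).
Proof.
  intros u v. eapply Rle_trans; [apply snr_rate_lipschitz; assumption |].
  rewrite Rmult_assoc. apply Rmult_le_compat_l; [apply snr_rate_lip_nonneg; assumption |].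
  eapply Rle_trans; [apply Rmax0_lipschitz |].
  replace (Rabs p - V * u - (Rabs p - V * v)) with (V * (v - u)) by ring.
  rewrite Rabs_mult, Rabs_right, Rabs_minus_sym by lra. lra.
Qed.

Lemma approach_rate_lipschitz_hover u : lipschitz (A / (H ^ 3 * ln 2)) (fun p => approach_rate p u).
Proof.
  intros p q. eapply Rle_trans; [apply snr_rate_lipschitz; assumption |].
  apply Rmult_le_compat_l; [apply snr_rate_lip_nonneg; assumption |].
  eapply Rle_trans; [apply Rmax0_lipschitz |].
  replace (Rabs p - V * u - (Rabs q - V * u)) with (Rabs p - Rabs q) by ring.
  apply Rabs_triang_inv2.
Qed.

Lemma approach_rate_mono p u v : u <= v -> approach_rate p u <= approach_rate p v.
Proof.
  intros Huv. apply snr_rate_antitone; [exact A_nonneg | exact H_pos |].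
  rewrite (Rabs_right (Rmax (_ - V * u) 0)), (Rabs_right (Rmax (_ - V * v) 0))
    by (apply Rle_ge, Rmax_r).
  apply Rle_max_compat_r. nra.
Qed.

Lemma approach_lip_nonneg : 0 <= A / (H ^ 3 * ln 2) * V.
Proof. apply Rmult_le_pos; [apply snr_rate_lip_nonneg |]; assumption. Qed.

Lemma ex_RInt_approach_rate p a b : ex_RInt (approach_rate p) a b.
Proof. apply (lipschitz_ex_RInt _ _ _ _ approach_lip_nonneg), approach_rate_lipschitz. Qed.

Lemma ex_RInt_approach_rate_shift p c a b : ex_RInt (fun t => approach_rate p (t - c)) a b.
Proof.
  apply (lipschitz_ex_RInt _ _ _ _ approach_lip_nonneg), lipschitz_comp_shift, approach_rate_lipschitz.
Qed.

Lemma ex_RInt_approach_rate_reflect p s a b : ex_RInt (fun t => approach_rate p (s - t)) a b.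
Proof.
  apply (lipschitz_ex_RInt _ _ _ _ approach_lip_nonneg), lipschitz_comp_reflect, approach_rate_lipschitz.
Qed.

Lemma RInt_approach_rate_shift p c b :
  RInt (fun t => approach_rate p (t - c)) c b = approach_gain p (b - c).
Proof.
  rewrite RInt_comp_shift by apply ex_RInt_approach_rate.
  unfold approach_gain. f_equal. ring.
Qed.

Lemma RInt_approach_rate_reflect p a s :
  RInt (fun t => approach_rate p (s - t)) a s = approach_gain p (s - a).
Proof.
  rewrite RInt_comp_reflect by apply ex_RInt_approach_rate.
  unfold approach_gain. f_equal. ring.
Qed.

Lemma approach_gain_0 p : approach_gain p 0 = 0.
Proof. apply (RInt_point (V := R_CompleteNormedModule)). Qed.

(* The rate only grows along the approach, so a delayed window of length [a] gains more. *)
Lemma approach_gain_superadditive p a b :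
  0 <= a -> 0 <= b -> approach_gain p a + approach_gain p b <= approach_gain p (a + b).
Proof.
  intros Ha Hb. unfold approach_gain.
  rewrite <- (RInt_Chasles (V := R_CompleteNormedModule) (approach_rate p) 0 b (a + b))
    by apply ex_RInt_approach_rate.
  change (plus ?x ?y) with (x + y).
  enough (RInt (approach_rate p) 0 a <= RInt (approach_rate p) b (a + b)) by lra.
  replace (RInt (approach_rate p) 0 a) with (RInt (fun t => approach_rate p (t - b)) b (a + b)).
  - apply RInt_le; [lra | apply ex_RInt_approach_rate_shift | apply ex_RInt_approach_rate |].
    intros t Ht. apply approach_rate_mono. lra.
  - rewrite RInt_approach_rate_shift. unfold approach_gain. f_equal. ring.
Qed.

Lemma approach_gain_continuity_pt a p : 0 <= a -> continuity_pt (fun q => approach_gain q a) p.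
Proof.
  intros Ha. apply (lipschitz_continuity_pt (a * (A / (H ^ 3 * ln 2)))).
  { apply Rmult_le_pos; [exact Ha | apply snr_rate_lip_nonneg; assumption]. }
  intros q1 q2. unfold approach_gain.
  rewrite <- (RInt_minus (V := R_CompleteNormedModule)) by apply ex_RInt_approach_rate.
  replace (a * (A / (H ^ 3 * ln 2)) * Rabs (q1 - q2))
    with ((a - 0) * (A / (H ^ 3 * ln 2) * Rabs (q1 - q2))) by ring.
  apply abs_RInt_le_const; [exact Ha | |].
  - apply (ex_RInt_minus (V := R_NormedModule)); apply ex_RInt_approach_rate.
  - intros t _. apply (approach_rate_lipschitz_hover t).
Qed.

Lemma RInt_window_split (r : R -> R) a s b tau c :
  a <= s -> 0 <= tau -> ex_RInt r a s -> ex_RInt r (s + tau) b ->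
  (forall t, s <= t <= s + tau -> r t = c) ->
  ex_RInt r a b /\ RInt r a b = RInt r a s + tau * c + RInt r (s + tau) b.
Proof.
  intros Has Htau Hl Hr Hc.
  assert (Ec : forall t, Rmin s (s + tau) < t < Rmax s (s + tau) -> c = r t).
  { intros t Ht. rewrite Rmin_left, Rmax_right in Ht by lra. symmetry. apply Hc. lra. }
  assert (Hm : ex_RInt r s (s + tau)) by exact (ex_RInt_ext _ _ _ _ Ec (ex_RInt_const _ _ c)).
  assert (Hls : ex_RInt r a (s + tau)) by exact (ex_RInt_Chasles _ _ _ _ Hl Hm).
  split; [exact (ex_RInt_Chasles _ _ _ _ Hls Hr) |].
  rewrite <- (RInt_Chasles (V := R_CompleteNormedModule) r a (s + tau) b) by assumption.
  rewrite <- (RInt_Chasles (V := R_CompleteNormedModule) r a s (s + tau)) by assumption.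
  rewrite <- (RInt_ext _ _ _ _ Ec), RInt_const.
  change (RInt r a s + (s + tau - s) * c + RInt r (s + tau) b = RInt r a s + tau * c + RInt r (s + tau) b).
  f_equal. f_equal. ring.
Qed.

Lemma window_frame_le (r : R -> R) a s b tau c p :
  a <= s -> 0 <= tau -> s + tau <= b -> ex_RInt r a s -> ex_RInt r (s + tau) b ->
  (forall t, s <= t <= s + tau -> r t = c) ->
  (forall t, a < t < s -> r t <= approach_rate p (s - t)) ->
  (forall t, s + tau < t < b -> r t <= approach_rate p (t - (s + tau))) ->
  ex_RInt r a b /\ RInt r a b <= tau * c + approach_gain p (b - a - tau).
Proof.
  intros Has Htau Hsb Hl Hr Hc Bl Br.
  destruct (RInt_window_split r a s b tau c) as [Hex ->]; try assumption.
  split; [exact Hex |].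
  assert (Ibefore : RInt r a s <= approach_gain p (s - a)).
  { rewrite <- RInt_approach_rate_reflect.
    apply RInt_le; [exact Has | exact Hl | apply ex_RInt_approach_rate_reflect | exact Bl]. }
  assert (Iafter : RInt r (s + tau) b <= approach_gain p (b - (s + tau))).
  { rewrite <- RInt_approach_rate_shift.
    apply RInt_le; [exact Hsb | exact Hr | apply ex_RInt_approach_rate_shift | exact Br]. }
  pose proof (approach_gain_superadditive p (s - a) (b - (s + tau)) ltac:(lra) ltac:(lra)) as Hsup.
  replace (s - a + (b - (s + tau))) with (b - a - tau) in Hsup by ring. lra.
Qed.

(* With the window at one end of the frame, the whole rest is a single approach. *)
Lemma window_frame_ge (r : R -> R) a s b tau c p :
  a <= s -> 0 <= tau -> s + tau <= b -> (s = a \/ s + tau = b) ->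
  ex_RInt r a s -> ex_RInt r (s + tau) b ->
  (forall t, s <= t <= s + tau -> r t = c) ->
  (forall t, a < t < s -> approach_rate p (s - t) <= r t) ->
  (forall t, s + tau < t < b -> approach_rate p (t - (s + tau)) <= r t) ->
  ex_RInt r a b /\ tau * c + approach_gain p (b - a - tau) <= RInt r a b.
Proof.
  intros Has Htau Hsb Hend Hl Hr Hc Bl Br.
  destruct (RInt_window_split r a s b tau c) as [Hex ->]; try assumption.
  split; [exact Hex |].
  assert (Ibefore : approach_gain p (s - a) <= RInt r a s).
  { rewrite <- RInt_approach_rate_reflect.
    apply RInt_le; [exact Has | apply ex_RInt_approach_rate_reflect | exact Hl | exact Bl]. }
  assert (Iafter : approach_gain p (b - (s + tau)) <= RInt r (s + tau) b).
  { rewrite <- RInt_approach_rate_shift.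
    apply RInt_le; [exact Hsb | apply ex_RInt_approach_rate_shift | exact Hr | exact Br]. }
  destruct Hend as [-> | Hend].
  - replace (a - a) with 0 in * by ring. rewrite approach_gain_0 in *.
    replace (b - (a + tau)) with (b - a - tau) in * by ring. lra.
  - replace (b - (s + tau)) with 0 in * by lra. rewrite approach_gain_0 in *.
    replace (s - a) with (b - a - tau) in * by lra. lra.
Qed.

End Approach.

(** * An optimal trajectory *)

Section Model.
Variables (M L : nat) (H D Pmax sigma2 beta0 lam Gt tau0 Tf Vmax : R).
Hypotheses (M_pos : (1 <= M)%nat) (L_pos : (1 <= L)%nat) (H_pos : 0 < H) (Pmax_pos : 0 < Pmax)
  (sigma2_pos : 0 < sigma2) (beta0_pos : 0 < beta0) (Gt_pos : 0 < Gt) (Gt_le : Gt <= INR M * Pmax / H ^ 2)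
  (tau0_pos : 0 < tau0) (tau0_lt : tau0 < Tf) (Vmax_pos : 0 < Vmax).

Definition snr_coef : R := beta0 / sigma2 * INR M * Pmax.

Lemma snr_coef_nonneg : 0 <= snr_coef.
Proof.
  unfold snr_coef. assert (0 < INR M) by (apply lt_0_INR; lia).
  assert (0 < beta0 / sigma2) by (apply Rdiv_lt_0_compat; assumption).
  apply Rlt_le, Rmult_lt_0_compat; [apply Rmult_lt_0_compat |]; assumption.
Qed.

Definition comm_rate (y : R) : R := snr_rate snr_coef H y.

Definition sense_rate (y : R) : R := log2 (1 + gamma_star M H D Pmax sigma2 beta0 lam Gt y).

Definition rest_gain (p : R) : R := approach_gain snr_coef H Vmax p (Tf - tau0).

Definition frame_value (p : R) : R := tau0 * sense_rate p + rest_gain p.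

Definition sensing_ok (p : R) : Prop := INR M * Pmax / ((D - p) ^ 2 + H ^ 2) >= Gt.

Lemma target_dist_pos p : 0 < (D - p) ^ 2 + H ^ 2.
Proof. pose proof (pow2_ge_0 (D - p)). pose proof (pow_lt H 2 H_pos). lra. Qed.

Lemma sensing_ok_D : sensing_ok D.
Proof. unfold sensing_ok. replace ((D - D) ^ 2 + H ^ 2) with (H ^ 2) by ring. lra. Qed.

Lemma comm_lip_nonneg : 0 <= snr_coef / (H ^ 3 * ln 2).
Proof. apply snr_rate_lip_nonneg; [apply snr_coef_nonneg | exact H_pos]. Qed.

Lemma comm_rate_lipschitz_on K a b x :
  0 <= K -> lipschitz_on K a b x ->
  lipschitz_on (snr_coef / (H ^ 3 * ln 2) * K) a b (fun t => comm_rate (x t)).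
Proof.
  intros HK Hx u v Hu Hv.
  eapply Rle_trans; [apply snr_rate_lipschitz; [apply snr_coef_nonneg | exact H_pos] |].
  rewrite Rmult_assoc. apply Rmult_le_compat_l; [apply comm_lip_nonneg |].
  apply Hx; assumption.
Qed.

Lemma ex_RInt_comm_rate K a b x :
  0 <= K -> a <= b -> lipschitz_on K a b x -> ex_RInt (fun t => comm_rate (x t)) a b.
Proof.
  intros HK Hab Hx. apply (lipschitz_on_ex_RInt (snr_coef / (H ^ 3 * ln 2) * K)); [| exact Hab |].
  - apply Rmult_le_pos; [apply comm_lip_nonneg | exact HK].
  - apply comm_rate_lipschitz_on; assumption.
Qed.

Lemma comm_rate_le_approach p u y :
  Rabs (y - p) <= Vmax * u -> comm_rate y <= approach_rate snr_coef H Vmax p u.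
Proof. apply approach_rate_ge; [apply snr_coef_nonneg | exact H_pos]. Qed.

Definition windows_ok (x : R -> R) (ts : nat -> R) : Prop :=
  forall l, (1 <= l <= L)%nat ->
    (INR l - 1) * Tf <= ts l /\ ts l + tau0 <= INR l * Tf /\
    (forall s, ts l <= s <= ts l + tau0 -> x s = x (ts l)).

Lemma frame_order l l' : (l < l')%nat -> INR l * Tf <= (INR l' - 1) * Tf.
Proof.
  intros Hll'. apply Rmult_le_compat_r; [lra |].
  apply le_INR in Hll'. rewrite S_INR in Hll'. lra.
Qed.

Lemma rate_in_frame x ts l : windows_ok x ts -> (1 <= l <= L)%nat ->
  (forall t, ts l <= t <= ts l + tau0 ->
     rate M L H D Pmax sigma2 beta0 lam Gt tau0 x ts t = sense_rate (x (ts l))) /\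
  (forall t, (INR l - 1) * Tf < t < INR l * Tf -> ~ (ts l <= t <= ts l + tau0) ->
     rate M L H D Pmax sigma2 beta0 lam Gt tau0 x ts t = comm_rate (x t)).
Proof.
  intros Hok Hl. destruct (Hok l Hl) as [Ha [Hb Hhover]]. split.
  - intros t Ht. unfold rate. destruct excluded_middle_informative as [_ | Hns].
    + unfold sense_rate. rewrite (Hhover t Ht). reflexivity.
    + exfalso. apply Hns. exists l. split; assumption.
  - intros t Ht Hout. unfold rate. destruct excluded_middle_informative as [[l' [Hl' Ht']] | _];
      [exfalso | reflexivity].
    destruct (Hok l' Hl') as [Ha' [Hb' _]].
    destruct (Nat.lt_total l' l) as [Hlt | [-> | Hgt]].
    + pose proof (frame_order _ _ Hlt). lra.
    + contradiction.
    + pose proof (frame_order _ _ Hgt). lra.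
Qed.

Lemma frame_in_horizon l t :
  (1 <= l <= L)%nat -> (INR l - 1) * Tf <= t <= INR l * Tf -> 0 <= t <= INR L * Tf.
Proof.
  intros [Hl1 HlL] Ht. apply le_INR in Hl1, HlL. simpl in Hl1.
  assert (0 <= (INR l - 1) * Tf) by (apply Rmult_le_pos; lra).
  assert (INR l * Tf <= INR L * Tf) by (apply Rmult_le_compat_r; lra). lra.
Qed.

Lemma feasible_windows_ok x ts : feasible M L H D Pmax Gt tau0 Tf Vmax x ts -> windows_ok x ts.
Proof. intros [_ Hf] l Hl. destruct (Hf l Hl) as [A1 [A2 [A3 _]]]. auto. Qed.

Lemma ex_RInt_rate_off_window x ts l K c d :
  windows_ok x ts -> (1 <= l <= L)%nat -> 0 <= K -> (INR l - 1) * Tf <= c <= d -> d <= INR l * Tf ->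
  lipschitz_on K c d x -> (forall t, c < t < d -> ~ (ts l <= t <= ts l + tau0)) ->
  ex_RInt (rate M L H D Pmax sigma2 beta0 lam Gt tau0 x ts) c d.
Proof.
  intros Hok Hl HK Hc Hd Hx Hout. apply (ex_RInt_ext (fun t => comm_rate (x t))).
  - intros t Ht. rewrite Rmin_left, Rmax_right in Ht by lra.
    symmetry. apply (rate_in_frame x ts l Hok Hl); [lra | apply Hout, Ht].
  - apply (ex_RInt_comm_rate K); [exact HK | lra | exact Hx].
Qed.

Lemma feasible_frame_le x ts l :
  feasible M L H D Pmax Gt tau0 Tf Vmax x ts -> (1 <= l <= L)%nat ->
  ex_RInt (rate M L H D Pmax sigma2 beta0 lam Gt tau0 x ts) ((INR l - 1) * Tf) (INR l * Tf) /\
  RInt (rate M L H D Pmax sigma2 beta0 lam Gt tau0 x ts) ((INR l - 1) * Tf) (INR l * Tf)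
    <= frame_value (x (ts l)).
Proof.
  intros Hfeas Hl. pose proof (feasible_windows_ok _ _ Hfeas) as Hok. destruct Hfeas as [Hlip _].
  destruct (Hok l Hl) as [Ha [Hb Hhover]]. destruct (rate_in_frame x ts l Hok Hl) as [Rwin Rout].
  assert (Hx : lipschitz_on Vmax ((INR l - 1) * Tf) (INR l * Tf) x).
  { intros u v Hu Hv. apply Hlip; apply (frame_in_horizon l); assumption. }
  unfold frame_value, rest_gain. replace (Tf - tau0) with (INR l * Tf - (INR l - 1) * Tf - tau0) by ring.
  apply (window_frame_le snr_coef H Vmax) with (s := ts l);
    [apply snr_coef_nonneg | exact H_pos | lra .. | | | | |].
  - apply (ex_RInt_rate_off_window x ts l Vmax); [exact Hok | exact Hl | lra .. | | intros; lra].
    eapply lipschitz_on_sub; [| | exact Hx]; lra.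
  - apply (ex_RInt_rate_off_window x ts l Vmax); [exact Hok | exact Hl | lra .. | | intros; lra].
    eapply lipschitz_on_sub; [| | exact Hx]; lra.
  - exact Rwin.
  - intros t Ht. rewrite Rout by lra. apply comm_rate_le_approach.
    rewrite <- (Rabs_right (ts l - t)) by lra. rewrite Rabs_minus_sym. apply Hx; lra.
  - intros t Ht. rewrite Rout by lra. apply comm_rate_le_approach.
    rewrite <- (Hhover (ts l + tau0)) by lra. rewrite <- (Rabs_right (t - (ts l + tau0))) by lra.
    apply Hx; lra.
Qed.

Lemma approach_le_comm_rate p u y :
  Rabs y <= Rmax (Rabs p - Vmax * u) 0 -> approach_rate snr_coef H Vmax p u <= comm_rate y.
Proof. apply approach_rate_le; [apply snr_coef_nonneg | exact H_pos]. Qed.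

Lemma two_Tf_pos : 0 < 2 * Tf.
Proof. lra. Qed.

Definition hover_traj (p t : R) : R := move_toward0 p (Vmax * Rmax (dist_mult (2 * Tf) t - tau0) 0).

(* Frames [2j] and [2j+1] sense in the two windows adjacent to [2 j Tf]. *)
Definition sense_start (l : nat) : R :=
  if Nat.odd l then 2 * INR (Nat.div2 l) * Tf else 2 * INR (Nat.div2 l) * Tf - tau0.

Lemma hover_traj_lipschitz p : lipschitz Vmax (hover_traj p).
Proof.
  intros u v. unfold hover_traj. eapply Rle_trans; [apply move_toward0_lipschitz |].
  rewrite Rmult_1_l, <- Rmult_minus_distr_l, Rabs_mult, Rabs_right by lra.
  apply Rmult_le_compat_l; [lra |]. eapply Rle_trans; [apply Rmax0_lipschitz |].
  replace (dist_mult (2 * Tf) u - tau0 - (dist_mult (2 * Tf) v - tau0))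
    with (dist_mult (2 * Tf) u - dist_mult (2 * Tf) v) by ring.
  apply dist_mult_lipschitz, two_Tf_pos.
Qed.

Lemma hover_traj_reflect p t1 t2 :
  (exists n : Z, Z.Even n /\ t1 + t2 = IZR n * Tf) -> hover_traj p t1 = hover_traj p t2.
Proof.
  intros [n [[m ->] Ht]]. unfold hover_traj.
  rewrite (dist_mult_reflect (2 * Tf) two_Tf_pos t1 t2 m); [reflexivity |].
  rewrite Ht, mult_IZR. simpl. ring.
Qed.

Lemma sense_start_parity l : exists j : nat,
  INR l = 2 * INR j + 1 /\ sense_start l = 2 * INR j * Tf \/
  INR l = 2 * INR j /\ sense_start l = 2 * INR j * Tf - tau0.
Proof.
  exists (Nat.div2 l). pose proof (Nat.div2_odd l) as El. unfold sense_start.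
  destruct (Nat.odd l); simpl Nat.b2n in El; [left | right]; (split; [| reflexivity]);
    rewrite El at 1; rewrite ?Nat.add_0_r, ?plus_INR, mult_INR; simpl; ring.
Qed.

Lemma sense_start_in_frame l : (1 <= l)%nat ->
  (INR l - 1) * Tf <= sense_start l /\ sense_start l + tau0 <= INR l * Tf /\
  (sense_start l = (INR l - 1) * Tf \/ sense_start l + tau0 = INR l * Tf).
Proof.
  intros Hl. destruct (sense_start_parity l) as [j [[-> ->] | [-> ->]]]; repeat split; lra.
Qed.

Lemma hover_dist_in_frame l t : (INR l - 1) * Tf <= t <= INR l * Tf ->
  Rmax (dist_mult (2 * Tf) t - tau0) 0 = window_dist (sense_start l) tau0 t.
Proof.
  intros Ht. destruct (sense_start_parity l) as [j [[El ->] | [El ->]]]; rewrite El in Ht;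
    rewrite (dist_mult_eq (2 * Tf) two_Tf_pos t (Z.of_nat j)), <- INR_IZR_INZ
      by (rewrite <- INR_IZR_INZ; split_Rabs; lra);
    unfold window_dist, Rmax; destruct (Rle_dec (_ - t) (t - _));
    repeat match goal with |- context [Rle_dec ?x ?y] => destruct (Rle_dec x y) end; split_Rabs; lra.
Qed.

Lemma Rabs_hover_traj p l t : (INR l - 1) * Tf <= t <= INR l * Tf ->
  Rabs (hover_traj p t) =
  Rmax (Rabs p - Vmax * window_dist (sense_start l) tau0 t) 0.
Proof.
  intros Ht. unfold hover_traj.
  rewrite Rabs_move_toward0, (hover_dist_in_frame l); [reflexivity | exact Ht |].
  apply Rmult_le_pos; [lra | apply Rmax_r].
Qed.

Lemma hover_traj_window p l t :
  (1 <= l)%nat -> sense_start l <= t <= sense_start l + tau0 -> hover_traj p t = p.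
Proof.
  intros Hl Ht. destruct (sense_start_in_frame l Hl) as [Ha [Hb _]].
  unfold hover_traj.
  rewrite (hover_dist_in_frame l), (proj1 (proj2 (window_dist_cases _ _ t (Rlt_le _ _ tau0_pos)))) by lra.
  rewrite Rmult_0_r. apply move_toward0_0.
Qed.

Lemma hover_traj_windows_ok p : windows_ok (hover_traj p) sense_start.
Proof.
  intros l [Hl _]. destruct (sense_start_in_frame l Hl) as [Ha [Hb _]].
  split; [exact Ha | split; [exact Hb |]].
  intros s Hs. rewrite !(hover_traj_window p l _ Hl) by lra. reflexivity.
Qed.

Lemma hover_traj_feasible p :
  sensing_ok p -> feasible M L H D Pmax Gt tau0 Tf Vmax (hover_traj p) sense_start.
Proof.
  intros Hp. split.
  - intros u v _ _. apply hover_traj_lipschitz.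
  - intros l Hl. destruct (hover_traj_windows_ok p l Hl) as [Ha [Hb Hhover]].
    split; [exact Ha | split; [exact Hb | split; [exact Hhover |]]].
    rewrite (hover_traj_window p l _ (proj1 Hl)) by lra. exact Hp.
Qed.

Lemma hover_traj_frame_ge p l : (1 <= l <= L)%nat ->
  ex_RInt (rate M L H D Pmax sigma2 beta0 lam Gt tau0 (hover_traj p) sense_start)
    ((INR l - 1) * Tf) (INR l * Tf) /\
  frame_value p <=
  RInt (rate M L H D Pmax sigma2 beta0 lam Gt tau0 (hover_traj p) sense_start)
    ((INR l - 1) * Tf) (INR l * Tf).
Proof.
  intros Hl. destruct (sense_start_in_frame l (proj1 Hl)) as [Ha [Hb Hend]].
  pose proof (hover_traj_windows_ok p) as Hok.
  destruct (rate_in_frame _ _ l Hok Hl) as [Rwin Rout].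
  rewrite (hover_traj_window p l _ (proj1 Hl)) in Rwin by lra.
  assert (Hx : forall c d, lipschitz_on Vmax c d (hover_traj p))
    by (intros c d u v _ _; apply hover_traj_lipschitz).
  unfold frame_value, rest_gain. replace (Tf - tau0) with (INR l * Tf - (INR l - 1) * Tf - tau0) by ring.
  apply (window_frame_ge snr_coef H Vmax) with (s := sense_start l);
    [apply snr_coef_nonneg | exact H_pos | lra .. | | | | |].
  - apply (ex_RInt_rate_off_window _ _ l Vmax); [exact Hok | exact Hl | lra .. | apply Hx | intros; lra].
  - apply (ex_RInt_rate_off_window _ _ l Vmax); [exact Hok | exact Hl | lra .. | apply Hx | intros; lra].
  - exact Rwin.
  - intros t Ht. rewrite Rout by lra. apply approach_le_comm_rate.
    rewrite (Rabs_hover_traj p l t), (proj1 (window_dist_cases _ _ t (Rlt_le _ _ tau0_pos))) by lra.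
    lra.
  - intros t Ht. rewrite Rout by lra. apply approach_le_comm_rate.
    rewrite (Rabs_hover_traj p l t), (proj2 (proj2 (window_dist_cases _ _ t (Rlt_le _ _ tau0_pos))))
      by lra.
    lra.
Qed.

Definition snr (p : R) (w : nat -> C) : R := Cmod (herm M (h_c H beta0 lam p) w) ^ 2 / sigma2.

Definition admissible (pw : R * (nat -> C)) : Prop :=
  sensing_ok (fst pw) /\ normsq M (snd pw) <= Pmax /\
  Cmod (herm M (a_v H D (fst pw)) (snd pw)) ^ 2 >= ((D - fst pw) ^ 2 + H ^ 2) * Gt.

Definition precoded_value (pw : R * (nat -> C)) : R :=
  tau0 * log2 (1 + snr (fst pw) (snd pw)) + rest_gain (fst pw).

Lemma snr_nonneg p w : 0 <= snr p w.
Proof. apply Rmult_le_pos; [apply pow2_ge_0 | apply Rlt_le, Rinv_0_lt_compat, sigma2_pos]. Qed.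

(* Full power along the target steering vector yields beam gain [M Pmax]. *)
Lemma steering_precoder_admissible p :
  sensing_ok p -> admissible (p, fun m => Cmult (RtoC (sqrt (Pmax / INR M))) (a_v H D p m)).
Proof.
  intros Hp. assert (HM : 0 < INR M) by (apply lt_0_INR; lia).
  set (c := sqrt (Pmax / INR M)).
  assert (Hc2 : c ^ 2 = Pmax / INR M)
    by (unfold c; rewrite <- Rsqr_pow2; apply Rsqr_sqrt, Rlt_le, Rdiv_lt_0_compat; lra).
  assert (Hc0 : 0 <= c) by apply sqrt_pos.
  split; [exact Hp | split]; cbn [fst snd].
  - unfold normsq. rewrite (rsum_ext _ (fun _ => c ^ 2)), rsum_const, Hc2; [right; field; lra |].
    intros m _. rewrite Cmod_mult, Cmod_R. unfold a_v, arr. rewrite Cmod_expj, Rabs_right by lra. ring.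
  - unfold herm. rewrite (csum_ext _ (fun _ => RtoC c)) by (intros m _; apply Cconj_expj_mult).
    rewrite csum_const, Cmod_R, Rabs_right, Rpow_mult_distr, Hc2 by (apply Rle_ge, Rmult_le_pos; lra).
    unfold sensing_ok in Hp.
    pose proof (target_dist_pos p) as HX.
    apply Rle_ge. apply Rge_le in Hp.
    apply (Rmult_le_reg_r (/ ((D - p) ^ 2 + H ^ 2))); [apply Rinv_0_lt_compat, HX |].
    replace (((D - p) ^ 2 + H ^ 2) * Gt * / ((D - p) ^ 2 + H ^ 2)) with Gt by (field; lra).
    replace (INR M ^ 2 * (Pmax / INR M) * / ((D - p) ^ 2 + H ^ 2))
      with (INR M * Pmax / ((D - p) ^ 2 + H ^ 2)) by (field; lra).
    exact Hp.
Qed.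

Lemma admissible_snr_set p g :
  sensing_ok p ->
  (snr_set M H D Pmax sigma2 beta0 lam Gt p g <-> exists w, admissible (p, w) /\ g = snr p w).
Proof.
  intros Hp. split.
  - intros [w [W1 [W2 ->]]]. exists w. repeat split; assumption.
  - intros [w [[_ [W1 W2]] ->]]. exists w. repeat split; assumption.
Qed.

(* [gamma_star] is a supremum over precoders, so [frame_value] is the supremum of
   [precoded_value] at a fixed hovering point. *)
Lemma frame_value_bounds p Pm :
  sensing_ok p -> (forall w, admissible (p, w) -> precoded_value (p, w) <= Pm) ->
  frame_value p <= Pm /\ (forall w, admissible (p, w) -> precoded_value (p, w) <= frame_value p).
Proof.
  intros Hp HPm.
  set (B := Rpower 2 ((Pm - rest_gain p) / tau0) - 1).
  assert (HB : forall w, admissible (p, w) -> snr p w <= B).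
  { intros w Hw. specialize (HPm w Hw). unfold precoded_value in HPm. cbn [fst snd] in HPm.
    unfold B. enough (1 + snr p w <= Rpower 2 ((Pm - rest_gain p) / tau0)) by lra.
    apply log2_le_Rpower; [pose proof (snr_nonneg p w); lra |].
    apply (Rmult_le_reg_l tau0); [lra |].
    replace (tau0 * ((Pm - rest_gain p) / tau0)) with (Pm - rest_gain p) by (field; lra). lra. }
  pose proof (steering_precoder_admissible p Hp) as Hw0.
  set (w0 := fun m => Cmult (RtoC (sqrt (Pmax / INR M))) (a_v H D p m)) in Hw0.
  destruct (Lub_Rbar_is_lub (snr_set M H D Pmax sigma2 beta0 lam Gt p) (snr p w0) B) as [Hub Hleast].
  { apply admissible_snr_set; [exact Hp | exists w0; split; [exact Hw0 | reflexivity]]. }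
  { intros g Hg. apply admissible_snr_set in Hg as [w [Hw ->]]; [apply HB, Hw | exact Hp]. }
  fold (gamma_star M H D Pmax sigma2 beta0 lam Gt p) in Hub, Hleast.
  assert (Hsnr : forall w, admissible (p, w) -> snr p w <= gamma_star M H D Pmax sigma2 beta0 lam Gt p).
  { intros w Hw. apply Hub, admissible_snr_set; [exact Hp | exists w; split; [exact Hw | reflexivity]]. }
  assert (Hg0 : 0 <= gamma_star M H D Pmax sigma2 beta0 lam Gt p).
  { apply (Rle_trans _ (snr p w0)); [apply snr_nonneg | apply Hsnr, Hw0]. }
  unfold frame_value, sense_rate. split.
  - assert (HgB : gamma_star M H D Pmax sigma2 beta0 lam Gt p <= B).
    { apply Hleast. intros g Hg. apply admissible_snr_set in Hg as [w [Hw ->]]; [apply HB, Hw | exact Hp]. }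
    assert (Hlog : log2 (1 + gamma_star M H D Pmax sigma2 beta0 lam Gt p) <= (Pm - rest_gain p) / tau0).
    { rewrite <- (log2_Rpower ((Pm - rest_gain p) / tau0)). apply log2_le; unfold B in *; lra. }
    apply (Rmult_le_compat_l tau0) in Hlog; [| lra].
    replace (tau0 * ((Pm - rest_gain p) / tau0)) with (Pm - rest_gain p) in Hlog by (field; lra). lra.
  - intros w Hw. unfold precoded_value. cbn [fst snd]. apply Rplus_le_compat_r, Rmult_le_compat_l; [lra |].
    apply log2_le; [pose proof (snr_nonneg p w); lra | specialize (Hsnr w Hw); lra].
Qed.

Lemma sensing_ok_bound p : sensing_ok p -> Rabs p <= Rabs D + sqrt (INR M * Pmax / Gt).
Proof.
  unfold sensing_ok. intros Hp. apply Rge_le in Hp.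
  pose proof (target_dist_pos p) as HX.
  assert (Hsq : (D - p) ^ 2 <= INR M * Pmax / Gt).
  { apply (Rmult_le_reg_l Gt); [exact Gt_pos |].
    apply (Rmult_le_compat_r ((D - p) ^ 2 + H ^ 2)) in Hp; [| lra].
    replace (INR M * Pmax / ((D - p) ^ 2 + H ^ 2) * ((D - p) ^ 2 + H ^ 2)) with (INR M * Pmax) in Hp
      by (field; lra).
    replace (Gt * (INR M * Pmax / Gt)) with (INR M * Pmax) by (field; lra).
    pose proof (pow_lt H 2 H_pos). nra. }
  apply Rabs_le_sqrt in Hsq. pose proof (Rabs_triang_inv p D). rewrite Rabs_minus_sym in Hsq. lra.
Qed.

Lemma precoder_entry_bound w m : normsq M w <= Pmax -> (m < M)%nat ->
  Rabs (fst (w m)) <= sqrt Pmax /\ Rabs (snd (w m)) <= sqrt Pmax.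
Proof.
  intros Hw Hm.
  assert (Hm2 : Cmod (w m) ^ 2 <= Pmax).
  { eapply Rle_trans; [| exact Hw].
    apply (rsum_ge_term (fun k => Cmod (w k) ^ 2)); [intros; apply pow2_ge_0 | exact Hm]. }
  apply Rabs_le_sqrt in Hm2. rewrite Rabs_right in Hm2 by (apply Rle_ge, Cmod_ge_0).
  pose proof (Rmax_Cmod (w m)) as Hmax. split; eapply Rle_trans; [| exact Hm2 | | exact Hm2];
    eapply Rle_trans; [| exact Hmax | | exact Hmax]; [apply Rmax_l | apply Rmax_r].
Qed.

Lemma is_lim_Cseq_h_c (u : nat -> R) (l : R) m :
  is_lim_seq u l -> is_lim_Cseq (fun n => h_c H beta0 lam (u n) m) (h_c H beta0 lam l m).
Proof.
  intros Hu. assert (HX : 0 < l * (l * 1) + H * (H * 1)) by nra.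
  assert (Hq : 0 < beta0 * / (l * (l * 1) + H * (H * 1)))
    by (apply Rmult_lt_0_compat; [lra | apply Rinv_0_lt_compat, HX]).
  assert (Hs : sqrt (l * (l * 1) + H * (H * 1)) <> 0) by (apply Rgt_not_eq, sqrt_lt_R0, HX).
  split; [apply (is_lim_seq_comp_ex_derive (fun q => fst (h_c H beta0 lam q m)) u l)
         | apply (is_lim_seq_comp_ex_derive (fun q => snd (h_c H beta0 lam q m)) u l)];
    try exact Hu; unfold h_c, a_u, arr, expj, RtoC; simpl; auto_derive; repeat split; assumption || lra.
Qed.

Lemma is_lim_Cseq_a_v (u : nat -> R) (l : R) m :
  is_lim_seq u l -> is_lim_Cseq (fun n => a_v H D (u n) m) (a_v H D l m).
Proof.
  intros Hu. assert (HX : 0 < (D - l) * ((D - l) * 1) + H * (H * 1))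
    by (pose proof (Rle_0_sqr (D - l)); unfold Rsqr in *; nra).
  assert (Hs : sqrt ((D - l) * ((D - l) * 1) + H * (H * 1)) <> 0) by (apply Rgt_not_eq, sqrt_lt_R0, HX).
  split; [apply (is_lim_seq_comp_ex_derive (fun q => fst (a_v H D q m)) u l)
         | apply (is_lim_seq_comp_ex_derive (fun q => snd (a_v H D q m)) u l)];
    try exact Hu; unfold a_v, arr, expj; simpl; auto_derive; repeat split; assumption || lra.
Qed.

(* [(p, w)] has real coordinates [p, Re w_0, Im w_0, Re w_1, ...]. *)
Definition real_coord (pw : R * (nat -> C)) (i : nat) : R :=
  match i with
  | O => fst pw
  | S j => if Nat.even j then fst (snd pw (Nat.div2 j)) else snd (snd pw (Nat.div2 j))
  end.

Lemma real_coord_re pw m : real_coord pw (S (2 * m)) = fst (snd pw m).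
Proof. unfold real_coord. rewrite Nat.even_even, Nat.div2_double. reflexivity. Qed.

Lemma real_coord_im pw m : real_coord pw (S (S (2 * m))) = snd (snd pw m).
Proof.
  unfold real_coord. replace (S (2 * m)) with (2 * m + 1)%nat by lia.
  rewrite Nat.even_odd. replace (2 * m + 1)%nat with (S (2 * m)) by lia.
  rewrite Nat.div2_succ_double. reflexivity.
Qed.

Lemma admissible_real_coord_bound pw i : admissible pw -> (i < S (2 * M))%nat ->
  Rabs (real_coord pw i) <= Rmax (Rabs D + sqrt (INR M * Pmax / Gt)) (sqrt Pmax).
Proof.
  intros [Hp [Hw _]] Hi. destruct i as [|j]; simpl.
  - eapply Rle_trans; [apply sensing_ok_bound, Hp | apply Rmax_l].
  - assert (Hj : (Nat.div2 j < M)%nat).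
    { pose proof (Nat.div2_odd j). destruct (Nat.odd j); simpl Nat.b2n in *; lia. }
    destruct (precoder_entry_bound _ _ Hw Hj).
    destruct (Nat.even j); (eapply Rle_trans; [eassumption | apply Rmax_r]).
Qed.

Lemma admissible_closed (u : nat -> R * (nat -> C)) (p : R) w :
  (forall n, admissible (u n)) -> is_lim_seq (fun n => fst (u n)) p ->
  (forall m, (m < M)%nat -> is_lim_Cseq (fun n => snd (u n) m) (w m)) -> admissible (p, w).
Proof.
  intros Hu Hp Hw. split; [| split]; cbn [fst snd].
  - assert (Hlim : is_lim_seq (fun n => INR M * Pmax / ((D - fst (u n)) ^ 2 + H ^ 2))
                     (INR M * Pmax / ((D - p) ^ 2 + H ^ 2))).
    { apply (is_lim_seq_comp_ex_derive (fun q => INR M * Pmax / ((D - q) ^ 2 + H ^ 2))); [| exact Hp].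
      auto_derive. pose proof (Rle_0_sqr (D - p)). unfold Rsqr in *. nra. }
    apply Rle_ge, (is_lim_seq_le (fun _ => Gt) _ _ _ (fun n => Rge_le _ _ (proj1 (Hu n)))
                     (is_lim_seq_const Gt) Hlim).
  - apply (is_lim_seq_le _ (fun _ => Pmax) _ _ (fun n => proj1 (proj2 (Hu n)))
             (is_lim_seq_normsq M _ _ Hw) (is_lim_seq_const Pmax)).
  - assert (Hlhs : is_lim_seq (fun n => ((D - fst (u n)) ^ 2 + H ^ 2) * Gt) (((D - p) ^ 2 + H ^ 2) * Gt)).
    { apply (is_lim_seq_comp_ex_derive (fun q => ((D - q) ^ 2 + H ^ 2) * Gt)); [| exact Hp].
      auto_derive. exact I. }
    assert (Hrhs : is_lim_seq (fun n => Cmod (herm M (a_v H D (fst (u n))) (snd (u n))) ^ 2)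
                     (Cmod (herm M (a_v H D p) w) ^ 2)).
    { apply is_lim_seq_Cmod_sqr, is_lim_Cseq_herm; [intros m _; apply is_lim_Cseq_a_v, Hp | exact Hw]. }
    apply Rle_ge, (is_lim_seq_le _ _ _ _ (fun n => Rge_le _ _ (proj2 (proj2 (Hu n)))) Hlhs Hrhs).
Qed.

Lemma is_lim_seq_precoded_value (u : nat -> R * (nat -> C)) (p : R) w :
  is_lim_seq (fun n => fst (u n)) p ->
  (forall m, (m < M)%nat -> is_lim_Cseq (fun n => snd (u n) m) (w m)) ->
  is_lim_seq (fun n => precoded_value (u n)) (precoded_value (p, w)).
Proof.
  intros Hp Hw. unfold precoded_value, snr. apply is_lim_seq_plus'; cbn [fst snd].
  - apply (is_lim_seq_comp_ex_derive (fun X => tau0 * log2 (1 + X / sigma2))).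
    + unfold log2. auto_derive. pose proof (snr_nonneg p w) as Hs. unfold snr, Rdiv in Hs.
      pose proof ln2_pos. repeat split; lra.
    + apply is_lim_seq_Cmod_sqr, is_lim_Cseq_herm; [intros m _; apply is_lim_Cseq_h_c, Hp | exact Hw].
  - apply (is_lim_seq_continuous rest_gain); [| exact Hp].
    apply approach_gain_continuity_pt; [apply snr_coef_nonneg | exact H_pos | lra ..].
Qed.

Lemma admissible_seq_compact (u : nat -> R * (nat -> C)) :
  (forall n, admissible (u n)) ->
  exists phi pw, strictly_increasing phi /\ admissible pw /\
    is_lim_seq (fun n => precoded_value (u (phi n))) (precoded_value pw).
Proof.
  intros Hu.
  destruct (bounded_common_convergent_subseq (S (2 * M)) (fun n => real_coord (u n))
              (Rmax (Rabs D + sqrt (INR M * Pmax / Gt)) (sqrt Pmax))) as [phi [l [Hphi Hl]]].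
  { intros n i Hi. apply admissible_real_coord_bound; [apply Hu | exact Hi]. }
  set (w := fun m => (l (S (2 * m)), l (S (S (2 * m))))).
  assert (Hp : is_lim_seq (fun n => fst (u (phi n))) (l O)) by (apply (Hl O); lia).
  assert (Hw : forall m, (m < M)%nat -> is_lim_Cseq (fun n => snd (u (phi n)) m) (w m)).
  { intros m Hm. split.
    - apply (is_lim_seq_ext (fun n => real_coord (u (phi n)) (S (2 * m)))); [| apply Hl; lia].
      intros n. apply real_coord_re.
    - apply (is_lim_seq_ext (fun n => real_coord (u (phi n)) (S (S (2 * m))))); [| apply Hl; lia].
      intros n. apply real_coord_im. }
  exists phi, (l O, w). split; [exact Hphi | split].
  - apply (admissible_closed (fun n => u (phi n))); [intros n; apply Hu | exact Hp | exact Hw].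
  - apply (is_lim_seq_precoded_value (fun n => u (phi n))); assumption.
Qed.

Lemma frame_value_max : exists p, sensing_ok p /\ forall q, sensing_ok q -> frame_value q <= frame_value p.
Proof.
  destruct (seq_compact_attains_max _ admissible precoded_value admissible_seq_compact _
              (steering_precoder_admissible D sensing_ok_D)) as [[p w] [Hpw Hmax]].
  exists p. split; [exact (proj1 Hpw) |]. intros q Hq.
  apply (Rle_trans _ (precoded_value (p, w))).
  - apply (frame_value_bounds q); [exact Hq |]. intros w' Hw'. apply Hmax, Hw'.
  - apply (frame_value_bounds p (precoded_value (p, w))); [exact (proj1 Hpw) | | exact Hpw].
    intros w' Hw'. apply Hmax, Hw'.
Qed.

Lemma frame_start_succ i : (INR (S i) - 1) * Tf = INR i * Tf.
Proof. rewrite S_INR. ring. Qed.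

Lemma hover_traj_optimal :
  exists p, optimal M L H D Pmax sigma2 beta0 lam Gt tau0 Tf Vmax (hover_traj p) sense_start.
Proof.
  destruct frame_value_max as [p [Hp Hmax]]. exists p.
  split; [apply hover_traj_feasible, Hp |]. intros x ts Hfeas.
  set (r := rate M L H D Pmax sigma2 beta0 lam Gt tau0 x ts).
  set (r0 := rate M L H D Pmax sigma2 beta0 lam Gt tau0 (hover_traj p) sense_start).
  assert (Hup : forall i, (i < L)%nat ->
            ex_RInt r (INR i * Tf) (INR (S i) * Tf) /\ RInt r (INR i * Tf) (INR (S i) * Tf) <= frame_value p).
  { intros i Hi. rewrite <- frame_start_succ.
    destruct (feasible_frame_le x ts (S i) Hfeas ltac:(lia)) as [Hex Hle]. split; [exact Hex |].
    apply (Rle_trans _ _ _ Hle), Hmax. apply (proj2 Hfeas (S i)). lia. }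
  assert (Hlow : forall i, (i < L)%nat ->
            ex_RInt r0 (INR i * Tf) (INR (S i) * Tf) /\
            frame_value p <= RInt r0 (INR i * Tf) (INR (S i) * Tf)).
  { intros i Hi. rewrite <- frame_start_succ. apply hover_traj_frame_ge. lia. }
  destruct (RInt_consecutive r Tf L (fun i Hi => proj1 (Hup i Hi))) as [_ E].
  destruct (RInt_consecutive r0 Tf L (fun i Hi => proj1 (Hlow i Hi))) as [_ E0].
  unfold objective. fold r r0. rewrite E, E0. unfold Rdiv. apply Rmult_le_compat_r.
  - apply Rlt_le, Rinv_0_lt_compat, Rmult_lt_0_compat; [apply lt_0_INR; lia | lra].
  - apply rsum_le. intros i Hi. apply (Rle_trans _ (frame_value p)); [apply Hup | apply Hlow]; exact Hi.
Qed.

End Model.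

Theorem lemma1 (M L : nat) (H D Pmax sigma2 beta0 lam Gt tau0 Tf Vmax : R) :
  (1 <= M)%nat -> (1 <= L)%nat ->
  0 < H -> 0 < D -> 0 < Pmax -> 0 < sigma2 -> 0 < beta0 -> 0 < lam ->
  0 < Gt -> Gt <= INR M * Pmax / H^2 ->
  0 < tau0 -> tau0 < Tf -> 0 < Vmax ->
  exists (x : R -> R) (ts : nat -> R),
    optimal M L H D Pmax sigma2 beta0 lam Gt tau0 Tf Vmax x ts /\
    forall t1 t2 : R,
      0 <= t1 <= INR L * Tf -> 0 <= t2 <= INR L * Tf ->
      (exists n : Z, Z.Even n /\ t1 + t2 = IZR n * Tf) ->
      x t1 = x t2.
Proof.
  intros HM HL HH _ HP Hs2 Hb0 _ HGt HGtH Ht0 Ht0f HV.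
  destruct (hover_traj_optimal M L H D Pmax sigma2 beta0 lam Gt tau0 Tf Vmax) as [p Hopt]; try assumption.
  exists (hover_traj tau0 Tf Vmax p), (sense_start tau0 Tf). split; [exact Hopt |].
  intros t1 t2 _ _. apply hover_traj_reflect with (tau0 := tau0); assumption.
Qed.
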